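(* Let $Q$ and $C$ be fixed probability measures on $(\mathcal{X},\mathcal{A})$ with disjoint supports, and for a sequence $\delta_N\in(0,1)$ let $P=P_N=(1-\delta_N)Q+\delta_NC$, so that $\lambda_N=\mathrm{TV}(P_N,Q)=\delta_N$. Consider the model of all such sequences $(\delta_N)_{N\ge1}$. Then for every $\varepsilon\in(0,1]$, $$\underline\gamma^{\hat\lambda_{\mathrm{bayes}}}(\varepsilon)=\underline\gamma^{\mathrm{oracle}}(\varepsilon)=-1.$$
   Context: Setting: for each $N$, $m=m_N,n=n_N$ are deterministic positive integers, $N=m+n$, $m\le n$, $m/N\to\pi\in(0,1)$; independent samples $X_1,\dots,X_m$ i.i.d. $\sim P_N$ and $Y_1,\dots,Y_n$ i.i.d. $\sim Q$; $\alpha\in(0,1)$ fixed; $f,g$ are densities of $P_N,Q$ w.r.t. a common dominating measure and $\rho^*(z)=g(z)/(f(z)+g(z))$. For $t\in[0,1]$: $F(t)=P_N(\rho^*(X)\le t)$, $G(t)=Q(\rho^*(Y)\le t)$, $\hat F_m,\hat G_n$ the corresponding empirical distribution functions of $\rho^*(X_i)$ and $\rho^*(Y_j)$, $\sigma(t)=\sqrt{F(t)(1-F(t))/m+G(t)(1-G(t))/n}$, and $\hat\lambda^{\rho^*}(t)=\hat F_m(t)-\hat G_n(t)-q_{1-\alpha}\sigma(t)$ ($q_{1-\alpha}$ the standard normal quantile). The estimator $\hat\lambda_{\mathrm{bayes}}=\hat A_0+\hat A_1-1-q_{1-\alpha}\hat\sigma$ with $\hat A_0=\frac1m\sum_i\mathbf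 1\{\rho^*(X_i)\le1/2\}$, $\hat A_1=\frac1n\sum_j\mathbf 1\{\rho^*(Y_j)>1/2\}$, $\hat\sigma=\sqrt{\hat A_0(1-\hat A_0)/m+\hat A_1(1-\hat A_1)/n}$. $h_1\asymp h_2$ means both ratios have finite limsup. For an estimator $\hat\lambda$ and $\varepsilon\in(0,1]$, $\underline\gamma^{\hat\lambda}(\varepsilon)$ is the infimum of all $\gamma_0\in[-1,0)$ such that for every $\gamma\in(\gamma_0,0)$ and every sequence in the model with $\lambda_N\asymp N^\gamma$, $\mathbb{P}(\hat\lambda>(1-\varepsilon)\lambda_N)\to1$. $\underline\gamma^{\mathrm{oracle}}(\varepsilon)$ is the infimum of all $\gamma_0\in[-1,0)$ such that for every $\gamma\in(\gamma_0,0)$ and every sequence in the model with $\lambda_N\asymp N^\gamma$ there is a deterministic $(t_N)\subset[0,1]$ with $\mathbb{P}(\hat\lambda^{\rho^*}(t_N)>(1-\varepsilon)\lambda_N)\to1$. *)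

From HB Require Import structures.
From mathcomp Require Import all_boot all_order all_algebra.
From mathcomp Require Import all_classical all_reals all_analysis.
From mathcomp Require Import normal_distribution.

Set Implicit Arguments.
Unset Strict Implicit.
Unset Printing Implicit Defensive.

Import Order.TTheory GRing.Theory Num.Theory.
Import numFieldNormedType.Exports.
Local Open Scope classical_set_scope.
Local Open Scope ring_scope.

Section defs.
Context {R : realType} {d : measure_display} {T : measurableType d}.

Definition TV (P Q : probability T R) : R :=
  sup [set r : R | exists A, measurable A /\ r = `|fine (P A) - fine (Q A)|].

Definition is_density (mu : {measure set T -> \bar R}) (P : set T -> \bar R)
  (f : T -> R) : Prop :=
  measurable_fun setT f /\ (forall x, 0 <= f x) /\
  forall A, measurable A -> P A = (\int[mu]_(x in A) (f x)%:E)%E.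

Definition rho_star (f g : T -> R) (z : T) : R := g z / (f z + g z).

Definition emp_cdf (k : nat) (r : T -> R) (Z : 'I_k -> T) (t : R) : R :=
  k%:R^-1 * \sum_(i < k) (nat_of_bool (r (Z i) <= t))%:R.

Definition cdf_of (P : probability T R) (r : T -> R) (t : R) : R :=
  fine (P [set z | r z <= t]).

Definition sigma_or (m n : nat) (P Q : probability T R) (r : T -> R) (t : R) : R :=
  Num.sqrt (cdf_of P r t * (1 - cdf_of P r t) / m%:R
            + cdf_of Q r t * (1 - cdf_of Q r t) / n%:R).

Definition lambda_oracle (m n : nat) (q : R) (P Q : probability T R) (r : T -> R)
  (X : 'I_m -> T) (Y : 'I_n -> T) (t : R) : R :=
  emp_cdf r X t - emp_cdf r Y t - q * sigma_or m n P Q r t.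

Definition A0hat (m : nat) (r : T -> R) (X : 'I_m -> T) : R :=
  m%:R^-1 * \sum_(i < m) (nat_of_bool (r (X i) <= 2^-1))%:R.
Definition A1hat (n : nat) (r : T -> R) (Y : 'I_n -> T) : R :=
  n%:R^-1 * \sum_(j < n) (nat_of_bool (2^-1 < r (Y j)))%:R.
Definition lambda_bayes (m n : nat) (q : R) (r : T -> R)
  (X : 'I_m -> T) (Y : 'I_n -> T) : R :=
  A0hat r X + A1hat r Y - 1 - q * Num.sqrt (A0hat r X * (1 - A0hat r X) / m%:R
                                           + A1hat r Y * (1 - A1hat r Y) / n%:R).

Definition iid_samples {dO : measure_display} {Omega : measurableType dO}
  (Pr : probability Omega R) (m n : nat) (P Q : probability T R)
  (X : 'I_m -> Omega -> T) (Y : 'I_n -> Omega -> T) : Prop :=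
  (forall i, measurable_fun setT (X i)) /\ (forall j, measurable_fun setT (Y j)) /\
  forall (A : 'I_m -> set T) (B : 'I_n -> set T),
    (forall i, measurable (A i)) -> (forall j, measurable (B j)) ->
    fine (Pr ((\bigcap_(i in [set: 'I_m]) (X i @^-1` A i))
               `&` (\bigcap_(j in [set: 'I_n]) (Y j @^-1` B j))))
    = (\prod_(i < m) fine (P (A i))) * (\prod_(j < n) fine (Q (B j))).

End defs.

Definition asymp {R : realType} (h1 h2 : nat -> R) : Prop :=
  limn_esup (fun N => (h1 N / h2 N)%:E) \is a fin_num /\
  limn_esup (fun N => (h2 N / h1 N)%:E) \is a fin_num.

Definition in_model {R : realType} {d : measure_display} {T : measurableType d}
  (Q C : probability T R) (delta : nat -> R) (P : nat -> probability T R) : Prop :=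
  (forall N, 0 < delta N < 1) /\
  forall N A, measurable A ->
    P N A = ((1 - delta N)%:E * Q A + (delta N)%:E * C A)%E.

Definition bayes_ok {R : realType} {d : measure_display} {T : measurableType d}
  (Q C : probability T R) (m n : nat -> nat) (q eps gamma0 : R) : Prop :=
  forall gamma : R, gamma0 < gamma < 0 ->
  forall (delta : nat -> R) (P : nat -> probability T R), in_model Q C delta P ->
  asymp (fun N => TV (P N) Q) (fun N => (N%:R : R) `^ gamma) ->
  forall (mu : nat -> {measure set T -> \bar R}) (f g : nat -> T -> R),
  (forall N, is_density (mu N) (P N) (f N) /\ is_density (mu N) Q (g N)) ->
  forall (dO : nat -> measure_display) (Omega : forall N, measurableType (dO N))
    (Pr : forall N, probability (Omega N) R)
    (X : forall N, 'I_(m N) -> Omega N -> T) (Y : forall N, 'I_(n N) -> Omega N -> T),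
  (forall N, iid_samples (Pr N) (P N) Q (X N) (Y N)) ->
  (fun N => fine (Pr N [set w | (1 - eps) * TV (P N) Q <
      lambda_bayes q (rho_star (f N) (g N)) (fun i => X N i w) (fun j => Y N j w)]))
    @ \oo --> (1 : R).

Definition oracle_ok {R : realType} {d : measure_display} {T : measurableType d}
  (Q C : probability T R) (m n : nat -> nat) (q eps gamma0 : R) : Prop :=
  forall gamma : R, gamma0 < gamma < 0 ->
  forall (delta : nat -> R) (P : nat -> probability T R), in_model Q C delta P ->
  asymp (fun N => TV (P N) Q) (fun N => (N%:R : R) `^ gamma) ->
  forall (mu : nat -> {measure set T -> \bar R}) (f g : nat -> T -> R),
  (forall N, is_density (mu N) (P N) (f N) /\ is_density (mu N) Q (g N)) ->
  exists t : nat -> R, (forall N, 0 <= t N <= 1) /\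
  forall (dO : nat -> measure_display) (Omega : forall N, measurableType (dO N))
    (Pr : forall N, probability (Omega N) R)
    (X : forall N, 'I_(m N) -> Omega N -> T) (Y : forall N, 'I_(n N) -> Omega N -> T),
  (forall N, iid_samples (Pr N) (P N) Q (X N) (Y N)) ->
  (fun N => fine (Pr N [set w | (1 - eps) * TV (P N) Q <
      lambda_oracle q (P N) Q (rho_star (f N) (g N))
        (fun i => X N i w) (fun j => Y N j w) (t N)]))
    @ \oo --> (1 : R).

Definition gamma_bayes {R : realType} {d : measure_display} {T : measurableType d}
  (Q C : probability T R) (m n : nat -> nat) (q eps : R) : R :=
  inf [set gamma0 : R | -1 <= gamma0 < 0 /\ bayes_ok Q C m n q eps gamma0].

Definition gamma_oracle {R : realType} {d : measure_display} {T : measurableType d}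
  (Q C : probability T R) (m n : nat -> nat) (q eps : R) : R :=
  inf [set gamma0 : R | -1 <= gamma0 < 0 /\ oracle_ok Q C m n q eps gamma0].

From HB Require Import structures.
From mathcomp Require Import all_boot all_order all_algebra.
From mathcomp Require Import all_classical all_reals all_analysis.
From mathcomp Require Import normal_distribution measurable_realfun.
From mathcomp Require Import ring lra.
Import Order.TTheory GRing.Theory Num.Theory.
Import numFieldNormedType.Exports.
Local Open Scope classical_set_scope.
Local Open Scope ring_scope.

(* With [rho_star f g = g / (f + g)], the set [bayes_set = {g <= f}] of points where
   [rho_star <= 1/2] has Q-measure 0 and C-measure 1, because Q and C live on disjoint
   sets; hence P_N(bayes_set) = delta_N = TV(P_N, Q).  Almost surely every Y_j avoids
   bayes_set, so that hat A_1 = 1 and hat G_n(1/2) = 0, while m hat A_0 = m hat F_m(1/2)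
   counts the X_i in bayes_set and is binomial(m, delta_N).  Chebyshev's inequality puts
   hat A_0 above (1 - eps/2) delta_N with probability at least 1 - 4 / (eps^2 m delta_N),
   and once 4 q^2 < eps^2 m delta_N the standard-deviation terms of both estimators cost
   less than another eps delta_N / 2, by AM-GM.  If delta_N is of order N^gamma with
   gamma > -1 then m delta_N -> +oo, so both probabilities tend to 1: -1 is admissible for
   both estimators (with t_N = 1/2 for the oracle), hence it is the infimum.  The value of
   the quantile q plays no role. *)

Section real_probability.
Context {R : realType} {d : measure_display} {T : measurableType d}
  (P : probability T R).

Definition pr (A : set T) : R := fine (P A).

Lemma prE A : measurable A -> P A = (pr A)%:E.
Proof.
move=> mA; rewrite /pr fineK// ge0_fin_numE// (le_lt_trans _ (ltry 1))//.
exact: probability_le1.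
Qed.

Lemma pr_ge0 A : 0 <= pr A.
Proof. by rewrite /pr fine_ge0. Qed.

Lemma pr_le1 A : measurable A -> pr A <= 1.
Proof. by move=> mA; rewrite -lee_fin -prE// probability_le1. Qed.

Lemma pr_setT : pr setT = 1.
Proof. by rewrite /pr probability_setT. Qed.

Lemma le_pr A B : measurable A -> measurable B -> A `<=` B -> pr A <= pr B.
Proof. by move=> mA mB AB; rewrite -lee_fin -!prE// le_measure ?inE. Qed.

Lemma pr_setU A B : measurable A -> measurable B -> A `&` B = set0 ->
  pr (A `|` B) = pr A + pr B.
Proof.
move=> mA mB AB; apply: EFin_inj.
by rewrite EFinD -!prE ?measureU//; exact: measurableU.
Qed.

Lemma pr_setI_setIC A S : measurable A -> measurable S ->
  pr A = pr (A `&` S) + pr (A `&` ~` S).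
Proof.
move=> mA mS; rewrite -pr_setU -?setIUr ?setUCr ?setIT//.
- exact: measurableI.
- exact/measurableI/measurableC.
- by rewrite setIACA setICr !setI0.
Qed.

Lemma pr_setC A : measurable A -> pr (~` A) = 1 - pr A.
Proof. by move=> mA; rewrite -pr_setT (pr_setI_setIC _ _ measurableT mA) !setTI addrC addKr. Qed.

Lemma pr_bigsetU (I : choiceType) (s : seq I) (J : pred I) (F : I -> set T) :
  uniq s -> (forall i, measurable (F i)) ->
  (forall i j, i != j -> F i `&` F j = set0) ->
  pr (\big[setU/set0]_(i <- s | J i) F i) = \sum_(i <- s | J i) pr (F i).
Proof.
move=> + mF dF; elim: s => [|a s IH /= /andP[as_ us]].
  by rewrite !big_nil /pr measure0.
rewrite !big_cons; case: ifP => Ja; last exact: IH.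
rewrite pr_setU ?IH//; first exact: bigsetU_measurable.
rewrite -bigcup_seq_cond; apply/seteqP; split => // w [Fa [i /andP[si _] Fi]].
by rewrite -(dF a i) //; apply: contraNneq as_ => ->.
Qed.

End real_probability.

Lemma le_pr_density {R : realType} {d : measure_display} {T : measurableType d}
    (mu : {measure set T -> \bar R}) (P P' : probability T R) f f' B :
  is_density mu P f -> is_density mu P' f' -> measurable B ->
  (forall z, B z -> f z <= f' z) -> pr P B <= pr P' B.
Proof.
move=> [mf [f_ge0 Pf]] [mf' [f'_ge0 P'f']] mB ff'.
rewrite -lee_fin -!prE// Pf// P'f'// ge0_le_integral//.
- by move=> z _; rewrite lee_fin.
- exact/measurable_EFinP/(measurable_funS measurableT).
- exact/measurable_EFinP/(measurable_funS measurableT).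
Qed.

Section occurring_events.
Context {d : measure_display} {T : measurableType d} {I : finType} (E : I -> set T).

Definition occurring (w : T) : {set I} := [set i | `[< E i w >]].

Definition atom (K : {set I}) : set T := [set w | occurring w = K].

Lemma in_occurring i w : (i \in occurring w) = `[< E i w >].
Proof. by rewrite inE. Qed.

Lemma atom_disjoint K K' : K != K' -> atom K `&` atom K' = set0.
Proof. by move=> KK'; apply/seteqP; split => // w [/= wK wK']; rewrite -wK -wK' eqxx in KK'. Qed.

Lemma occurring_predE (Phi : pred {set I}) :
  [set w | Phi (occurring w)] = \big[setU/set0]_(K <- index_enum {set I} | Phi K) atom K.
Proof.
rewrite -bigcup_seq_cond; apply/seteqP; split => [w Pw|w [K /andP[_ PK] /= ->//]].
by exists (occurring w) => //=; rewrite mem_index_enum.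
Qed.

Hypothesis mE : forall i, measurable (E i).

Lemma measurable_atom K : measurable (atom K).
Proof.
have -> : atom K = \bigcap_(i in [set: I]) (if i \in K then E i else ~` E i).
  apply/seteqP; split => [w wK i _|w wK]; first by rewrite -wK in_occurring; case: asboolP.
  apply/setP => i; have := wK i Logic.I; rewrite in_occurring.
  by case: (i \in K) => [/asboolP|/asboolPn/negbTE].
apply: fin_bigcap_measurable => [|i _]; first exact: finite_finset.
by case: (i \in K); [exact: mE | exact/measurableC].
Qed.

Lemma measurable_occurring_pred (Phi : pred {set I}) :
  measurable [set w | Phi (occurring w)].
Proof. by rewrite occurring_predE; apply: bigsetU_measurable => K _; exact: measurable_atom. Qed.

End occurring_events.

Lemma measurable_determined {d : measure_display} {T : measurableType d} {I : finType}
    (b : I -> T -> bool) (B : set T) :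
  (forall i, measurable [set w | b i w]) ->
  (forall w w', (forall i, b i w = b i w') -> B w -> B w') -> measurable B.
Proof.
move=> mb Binv; pose E i := [set w | b i w].
pose Phi K := `[< exists2 w, B w & occurring E w = K >].
have -> : B = [set w | Phi (occurring E w)].
  apply/seteqP; split => [w Bw|w /asboolP[w' Bw' ww']]; first by apply/asboolP; exists w.
  apply: Binv Bw' => i.
  by have := congr1 (fun K : {set I} => i \in K) ww'; rewrite /= !in_occurring !asboolb.
exact: measurable_occurring_pred.
Qed.

Lemma natr_card_sum {R : pzSemiRingType} {I : finType} (K : {set I}) :
  #|K|%:R = \sum_i (i \in K)%:R :> R.
Proof. by rewrite -sum1_card natr_sum big_mkcond; apply: eq_bigr => i _; case: (i \in K). Qed.

(* The moments of the count are computed on the partition of [G] into the atoms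
   generated by the [E i]. *)
Section count_concentration.
Context {R : realType} {d : measure_display} {T : measurableType d}
  (P : probability T R) {I : finType} (E : I -> set T) (G : set T) (p : R).
Hypotheses (mE : forall i, measurable (E i)) (mG : measurable G).
Hypothesis pr_cap_pow : forall S : {set I},
  pr P (G `&` [set w | forall i, i \in S -> E i w]) = p ^+ #|S|.

Let weight K := pr P (G `&` atom E K).
Let n : R := #|I|%:R.

Lemma pr_occurring_pred (Phi : pred {set I}) :
  pr P (G `&` [set w | Phi (occurring E w)]) = \sum_(K | Phi K) weight K.
Proof.
rewrite occurring_predE big_distrr /= pr_bigsetU ?index_enum_uniq//.
- by move=> K; apply: measurableI => //; exact: measurable_atom.
- by move=> K K' KK'; rewrite setIACA setIid atom_disjoint ?setI0.
Qed.

Lemma sum_weight_supset (S : {set I}) :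
  \sum_(K : {set I} | S \subset K) weight K = p ^+ #|S|.
Proof.
rewrite -pr_occurring_pred -pr_cap_pow; congr (pr P (G `&` _)).
apply/seteqP; split => w /= wS.
  by move=> i /(fintype.subsetP wS); rewrite in_occurring => /asboolP.
by apply/fintype.subsetP => i /wS; rewrite in_occurring => /asboolP.
Qed.

Lemma sum_weight : \sum_(K : {set I}) weight K = 1.
Proof.
by rewrite -(expr0 p) -(cards0 I) -sum_weight_supset; apply: eq_bigl => K; rewrite finset.sub0set.
Qed.

Lemma sum_weight_card : \sum_(K : {set I}) #|K|%:R * weight K = n * p.
Proof.
under eq_bigr do rewrite natr_card_sum mulr_suml.
rewrite exchange_big (eq_bigr (fun=> p)) => [|i _]; first by rewrite sumr_const /n mulr_natl.
rewrite -[p]expr1 -(cards1 i) -sum_weight_supset [RHS]big_mkcond /=.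
by apply: eq_bigr => K _; rewrite finset.sub1set; case: (i \in K); rewrite ?mul1r ?mul0r.
Qed.

Lemma sum_weight_card2 :
  \sum_(K : {set I}) #|K|%:R ^+ 2 * weight K = n * p + n * (n - 1) * p ^+ 2.
Proof.
have card2 (K : {set I}) : #|K|%:R ^+ 2 * weight K =
    \sum_i \sum_j ((i \in K) && (j \in K))%:R * weight K.
  rewrite expr2 natr_card_sum !mulr_suml; apply: eq_bigr => i _.
  rewrite -mulrA mulr_suml mulr_sumr; apply: eq_bigr => j _.
  by rewrite mulrA; case: (i \in K); case: (j \in K); rewrite ?mul1r ?mul0r.
have pair i j : \sum_(K : {set I}) ((i \in K) && (j \in K))%:R * weight K = p ^+ #|[set i; j]%SET|.
  rewrite -sum_weight_supset [RHS]big_mkcond /=; apply: eq_bigr => K _.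
  rewrite finset.subUset !finset.sub1set.
  by case: (i \in K); case: (j \in K); rewrite ?mul1r ?mul0r.
under eq_bigr do rewrite card2.
rewrite exchange_big; under eq_bigr do rewrite exchange_big.
under eq_bigr do under eq_bigr do rewrite pair.
transitivity (\sum_(i : I) (p + (n - 1) * p ^+ 2)); last by rewrite sumr_const -mulr_natl; ring.
apply: eq_bigr => i _; rewrite (bigD1 i)//= finset.setUid cards1 expr1; congr (_ + _).
rewrite (eq_bigr (fun=> p ^+ 2)) => [|j ji]; last by rewrite cards2 eq_sym ji.
have I_gt0 : (0 < #|I|)%N by apply/card_gt0P; exists i.
by rewrite sumr_const cardC1 -mulr_natl /n -[in RHS](prednK I_gt0) -natr1 addrK.
Qed.

Lemma sum_weight_var : \sum_(K : {set I}) (#|K|%:R - n * p) ^+ 2 * weight K = n * p * (1 - p).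
Proof.
have expand (K : {set I}) : (#|K|%:R - n * p) ^+ 2 * weight K =
    #|K|%:R ^+ 2 * weight K - 2 * n * p * (#|K|%:R * weight K) + (n * p) ^+ 2 * weight K.
  by ring.
under eq_bigr do rewrite expand.
rewrite big_split sumrB /= -!mulr_sumr sum_weight_card2 sum_weight_card sum_weight.
by ring.
Qed.

Lemma count_concentration t : 0 < t ->
  1 - n * p * (1 - p) / t <=
  pr P (G `&` [set w | (#|occurring E w|%:R - n * p) ^+ 2 < t]).
Proof.
move=> t_gt0; pose near_mean (K : {set I}) := (#|K|%:R - n * p) ^+ 2 < t.
rewrite (pr_occurring_pred near_mean) lerBlDr -{1}sum_weight (bigID near_mean) /=.
rewrite lerD2l -sum_weight_var mulr_suml [leRHS](bigID near_mean) /=.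
apply: ler_wpDl.
  apply: sumr_ge0 => K _; apply: mulr_ge0; last by rewrite invr_ge0 ltW.
  exact/mulr_ge0/pr_ge0/sqr_ge0.
apply: ler_sum => K; rewrite -leNgt => tK.
by rewrite /weight mulrAC ler_peMl ?pr_ge0// ler_pdivlMr// mul1r.
Qed.

End count_concentration.

Lemma rho_star_le_half {R : realFieldType} (a b : R) : 0 <= a -> 0 <= b ->
  (b / (a + b) <= 2^-1) = (b <= a).
Proof.
move=> a_ge0 b_ge0; have [ab0|ab_neq0] := eqVneq (a + b) 0.
  have [-> ->] : a = 0 /\ b = 0 by split; lra.
  by rewrite mul0r lexx invr_ge0 ler0n.
have ab_gt0 : 0 < a + b by rewrite lt_neqAle eq_sym ab_neq0 addr_ge0.
by rewrite ler_pdivrMr//; apply/idP/idP => ?; lra.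
Qed.

Lemma mul_lt_am_gm {R : realFieldType} [eps M q s b delta : R] : 0 < eps -> 0 < M ->
  M * s ^+ 2 <= b -> 4 * q ^+ 2 < eps ^+ 2 * M * delta ->
  q * s < eps / 4 * (b + delta).
Proof.
move=> eps_gt0 M_gt0 Ms2_le q2_lt.
have amgm : 4 * (eps * M) * (q * s) <= eps ^+ 2 * M * (M * s ^+ 2) + 4 * q ^+ 2.
  by have := sqr_ge0 (eps * M * s - 2 * q); nra.
rewrite -(@ltr_pM2l _ (4 * (eps * M))) ?mulr_gt0// (le_lt_trans amgm)//.
have -> : 4 * (eps * M) * (eps / 4 * (b + delta)) =
    eps ^+ 2 * M * b + eps ^+ 2 * M * delta by field.
by rewrite ler_ltD// ler_wpM2l// mulr_ge0 ?sqr_ge0 ?ltW.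
Qed.

Lemma A1hat_emp_cdf {R : realType} {d : measure_display} {T : measurableType d}
    (n : nat) (r : T -> R) (Y : 'I_n -> T) :
  (0 < n)%N -> A1hat r Y = 1 - emp_cdf r Y 2^-1.
Proof.
move=> n_gt0; apply/eqP; rewrite eq_sym subr_eq /A1hat /emp_cdf -mulrDr -big_split /=.
rewrite (eq_bigr (fun=> 1)) => [|j _]; last by rewrite ltNge; case: (_ <= _); rewrite ?add0r ?addr0.
by rewrite sumr_const card_ord mulVf// pnatr_eq0 -lt0n.
Qed.

Lemma sqr_sqrt_div {R : rcfType} (v M : R) : 0 <= v -> 0 < M ->
  M * Num.sqrt (v / M) ^+ 2 = v.
Proof.
move=> v_ge0 M_gt0; rewrite sqr_sqrtr ?divr_ge0 ?(ltW M_gt0)//.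
by rewrite mulrC divfK ?gt_eqF.
Qed.

Section mixture_model.
Context {R : realType} {d : measure_display} {T : measurableType d}.
Context {Q C P : probability T R} {S : set T} {delta : R}.
Hypotheses (mS : measurable S) (QS : Q (~` S) = 0%E) (CS : C S = 0%E)
  (delta_gt0 : 0 < delta)
  (PE : forall A, measurable A -> P A = ((1 - delta)%:E * Q A + delta%:E * C A)%E).

Lemma pr_mixture B : measurable B -> pr P B = (1 - delta) * pr Q B + delta * pr C B.
Proof. by move=> mB; apply: EFin_inj; rewrite EFinD !EFinM -!prE// PE. Qed.

Lemma pr_Q_setIC B : measurable B -> pr Q (B `&` ~` S) = 0.
Proof.
move=> mB; apply/le_anti; rewrite pr_ge0 andbT.
have <- : pr Q (~` S) = 0 by rewrite /pr QS.
by apply: le_pr; [exact/measurableI/measurableC | exact/measurableC | exact: subIsetr].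
Qed.

Lemma pr_C_setI B : measurable B -> pr C (B `&` S) = 0.
Proof.
move=> mB; apply/le_anti; rewrite pr_ge0 andbT.
have <- : pr C S = 0 by rewrite /pr CS.
by apply: le_pr; [exact/measurableI | by [] | exact: subIsetr].
Qed.

Lemma TV_mixture : TV P Q = delta.
Proof.
rewrite /TV; set E := [set r | _].
have delta_ub : ubound E delta.
  move=> _ [B [mB ->]]; rewrite -/(pr P B) -/(pr Q B) pr_mixture//.
  have [Q_ge0 Q_le1] := (pr_ge0 Q B, pr_le1 Q _ mB).
  have [C_ge0 C_le1] := (pr_ge0 C B, pr_le1 C _ mB).
  rewrite (_ : _ - _ = delta * (pr C B - pr Q B)); last by ring.
  rewrite normrM gtr0_norm// ler_piMr ?(ltW delta_gt0)//.
  by rewrite ler_norml; apply/andP; split; lra.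
have delta_in : E delta.
  have mSC := measurableC mS.
  exists (~` S); split => //; rewrite -/(pr P _) -/(pr Q _) pr_mixture// (pr_setC C)//.
  have [-> ->] : pr C S = 0 /\ pr Q (~` S) = 0 by rewrite /pr CS QS.
  by rewrite !subr0 mulr0 add0r mulr1 gtr0_norm.
by apply/le_anti; rewrite ge_sup ?sup_upper_bound//; [split; exists delta | exists delta].
Qed.

Context {mu : {measure set T -> \bar R}} {f g : T -> R}.
Hypotheses (f_dens : is_density mu P f) (g_dens : is_density mu Q g).

Definition bayes_set := [set z | rho_star f g z <= 2^-1].

Lemma bayes_setE : bayes_set = [set z | g z <= f z].
Proof.
have [[_ [f_ge0 _]] [_ [g_ge0 _]]] := (f_dens, g_dens).
by apply/seteqP; split => z; rewrite /bayes_set /= /rho_star rho_star_le_half.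
Qed.

Lemma measurable_bayes_set : measurable bayes_set.
Proof.
rewrite bayes_setE -[X in measurable X]setTI.
by apply: measurable_fun_le => //; [exact: g_dens.1 | exact: f_dens.1].
Qed.

Lemma pr_Q_bayes_set : pr Q bayes_set = 0.
Proof.
have mA := measurable_bayes_set; have mAS := measurableI _ _ mA mS.
rewrite (pr_setI_setIC Q _ _ mA mS) pr_Q_setIC// addr0.
have : pr Q (bayes_set `&` S) <= pr P (bayes_set `&` S).
  by apply: le_pr_density g_dens f_dens mAS _ => z [+ _]; rewrite bayes_setE.
rewrite pr_mixture// pr_C_setI// mulr0 addr0 mulrBl mul1r => QP.
by apply/le_anti; rewrite pr_ge0 andbT -(pmulr_rle0 _ delta_gt0); lra.
Qed.

Lemma pr_P_bayes_set : pr P bayes_set = delta.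
Proof.
have mA := measurable_bayes_set; have mAC := measurableC mA.
have C_compl : pr C (~` bayes_set) = 0.
  rewrite (pr_setI_setIC C _ _ mAC mS) pr_C_setI// add0r.
  have mACSC : measurable (~` bayes_set `&` ~` S) by exact/measurableI/measurableC.
  have : pr P (~` bayes_set `&` ~` S) <= pr Q (~` bayes_set `&` ~` S).
    apply: le_pr_density f_dens g_dens mACSC _ => z [+ _].
    by rewrite bayes_setE /= => /negP; rewrite -ltNge => /ltW.
  rewrite pr_mixture// pr_Q_setIC// mulr0 add0r => PQ.
  by apply/le_anti; rewrite pr_ge0 andbT -(pmulr_rle0 _ delta_gt0).
have := pr_setC C _ mA; rewrite C_compl pr_mixture// pr_Q_bayes_set mulr0 add0r => CA.
by rewrite (_ : pr C bayes_set = 1) ?mulr1//; lra.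
Qed.

Context {dO : measure_display} {Omega : measurableType dO} {Pr : probability Omega R}
  {m n : nat} {X : 'I_m -> Omega -> T} {Y : 'I_n -> Omega -> T}.
Hypotheses (samples : iid_samples Pr P Q X Y) (m_gt0 : (0 < m)%N) (n_gt0 : (0 < n)%N).

Let m_pos : (0 : R) < m%:R. Proof. by rewrite ltr0n. Qed.

Let X_in i := X i @^-1` bayes_set.
Let Y_out := \bigcap_(j in [set: 'I_n]) Y j @^-1` ~` bayes_set.

Let measurable_X_in i : measurable (X_in i).
Proof. by rewrite -[X_in i]setTI; apply: samples.1 => //; exact: measurable_bayes_set. Qed.

Let measurable_Y_in j : measurable (Y j @^-1` bayes_set).
Proof. by rewrite -[_ @^-1` _]setTI; apply: samples.2.1 => //; exact: measurable_bayes_set. Qed.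

Let measurable_Y_out : measurable Y_out.
Proof.
rewrite /Y_out; apply: fin_bigcap_measurable => [|j _]; first exact: finite_finset.
by rewrite preimage_setC; exact/measurableC/measurable_Y_in.
Qed.

Lemma pr_samples_cap (K : {set 'I_m}) :
  pr Pr (Y_out `&` [set w | forall i, i \in K -> X_in i w]) = delta ^+ #|K|.
Proof.
have mA i : measurable (if i \in K then bayes_set else setT).
  by case: (i \in K) => //; exact: measurable_bayes_set.
have mAC (j : 'I_n) := measurableC measurable_bayes_set.
rewrite /pr setIC (_ : _ `&` _ = (\bigcap_(i in [set: 'I_m])
    X i @^-1` (if i \in K then bayes_set else setT)) `&` Y_out).
  rewrite samples.2.2// [X in _ * X]big1 => [|j _]; last first.
    by rewrite -/(pr Q _) pr_setC ?pr_Q_bayes_set ?subr0//; exact: measurable_bayes_set.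
  rewrite mulr1 (eq_bigr (fun i => if i \in K then delta else 1)) => [|i _].
    by rewrite -big_mkcond prodr_const.
  by case: (i \in K); rewrite -/(pr P _) ?pr_P_bayes_set ?pr_setT.
congr (_ `&` _); apply/seteqP; split => [w wK i _|w wK i iK] /=.
  by case: ifP => // /wK.
by have := wK i Logic.I; rewrite /= iK.
Qed.

Lemma A0hat_samples w :
  A0hat (rho_star f g) (X^~ w) = m%:R^-1 * #|occurring X_in w|%:R.
Proof.
rewrite /A0hat natr_card_sum; congr (_ * _).
by apply: eq_bigr => i _; rewrite in_occurring asboolb.
Qed.

Lemma emp_cdf_Y_out w : Y_out w -> emp_cdf (rho_star f g) (Y^~ w) 2^-1 = 0.
Proof.
move=> Yw; rewrite /emp_cdf big1 ?mulr0// => j _.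
by have /negP/negbTE -> := Yw j Logic.I.
Qed.

(* These statistics depend on [w] only through which samples fall in [bayes_set]. *)
Lemma measurable_sample_event (Phi : R -> R -> R -> Prop) :
  measurable [set w | Phi (A0hat (rho_star f g) (X^~ w)) (A1hat (rho_star f g) (Y^~ w))
                         (emp_cdf (rho_star f g) (Y^~ w) 2^-1)].
Proof.
pose b k w := match k with
  | inl i => rho_star f g (X i w) <= 2^-1 | inr j => rho_star f g (Y j w) <= 2^-1 end.
apply: (@measurable_determined _ _ _ b) => [[i|j]|w w' bww' /=].
- exact: measurable_X_in.
- exact: measurable_Y_in.
suff [-> [-> ->]] : [/\ A0hat (rho_star f g) (X^~ w) = A0hat (rho_star f g) (X^~ w'),
    A1hat (rho_star f g) (Y^~ w) = A1hat (rho_star f g) (Y^~ w') &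
    emp_cdf (rho_star f g) (Y^~ w) 2^-1 = emp_cdf (rho_star f g) (Y^~ w') 2^-1] by [].
split; congr (_ * _); apply: eq_bigr => k _.
- by have /= -> := bww' (inl k).
- by rewrite !ltNge; have /= -> := bww' (inr k).
- by have /= -> := bww' (inr k).
Qed.

Lemma pr_ge_count_lower_tail eps (B : set Omega) : 0 < eps -> measurable B ->
  (forall w, Y_out w -> (1 - eps / 2) * delta < m%:R^-1 * #|occurring X_in w|%:R -> B w) ->
  1 - 4 / (eps ^+ 2 * (m%:R * delta)) <= pr Pr B <= 1.
Proof.
move=> eps_gt0 mB typB; rewrite pr_le1// andbT.
have mdelta_gt0 : 0 < m%:R * delta by rewrite mulr_gt0// ltr0n.
have dev_gt0 : 0 < eps / 2 * (m%:R * delta) by rewrite mulr_gt0 ?divr_gt0.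
have t_gt0 : 0 < (eps / 2 * (m%:R * delta)) ^+ 2 by rewrite exprn_gt0.
have conc := count_concentration Pr X_in Y_out delta measurable_X_in measurable_Y_out
  pr_samples_cap _ t_gt0.
apply: le_trans (le_trans _ conc) _.
  rewrite card_ord lerD2l lerN2.
  have -> : 4 / (eps ^+ 2 * (m%:R * delta)) =
      m%:R * delta / (eps / 2 * (m%:R * delta)) ^+ 2.
    by field; rewrite !gt_eqF ?ltr0n.
  by rewrite ler_pM2r ?invr_gt0// ger_pMr// gerBl ltW.
apply: le_pr => // [|w [Yw close]].
  apply: measurableI => //.
  exact: (measurable_occurring_pred _ measurable_X_in (fun K => (#|K|%:R - _) ^+ 2 < _)).
apply: typB Yw _; move: close; rewrite card_ord; set c := #|occurring X_in w|%:R => close.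
have sqr_lt (x e : R) : 0 < e -> x ^+ 2 < e ^+ 2 -> - e < x by move=> *; nra.
have := sqr_lt _ _ dev_gt0 close.
by rewrite [_^-1 * _]mulrC ltr_pdivlMr ?ltr0n//; lra.
Qed.

Lemma pr_bayes_estimator_gt eps q : 0 < eps <= 1 ->
  4 * q ^+ 2 < eps ^+ 2 * m%:R * delta ->
  1 - 4 / (eps ^+ 2 * (m%:R * delta)) <=
    pr Pr [set w | (1 - eps) * TV P Q < lambda_bayes q (rho_star f g) (X^~ w) (Y^~ w)]
  <= 1.
Proof.
move=> /andP[eps_gt0 eps_le1] q_small; apply: pr_ge_count_lower_tail => // [|w Yw a0_gt].
  exact: (measurable_sample_event (fun a0 a1 _ => (1 - eps) * TV P Q <
    a0 + a1 - 1 - q * Num.sqrt (a0 * (1 - a0) / m%:R + a1 * (1 - a1) / n%:R))).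
rewrite /= /lambda_bayes TV_mixture A1hat_emp_cdf// emp_cdf_Y_out// A0hat_samples.
rewrite subr0 subrr mulr0 mul0r addr0 addrK.
set a0 := m%:R^-1 * _ in a0_gt *; set s := Num.sqrt _.
have a0_ge0 : 0 <= a0 by rewrite mulr_ge0 ?invr_ge0.
have a0_le1 : a0 <= 1.
  rewrite /a0 mulrC ler_pdivrMr ?ltr0n// mul1r ler_nat.
  by have := max_card (mem (occurring X_in w)); rewrite card_ord.
have Ms2 : m%:R * s ^+ 2 <= a0.
  by rewrite /s sqr_sqrt_div ?ltr0n ?mulr_ge0 ?subr_ge0//; nra.
have := mul_lt_am_gm eps_gt0 m_pos Ms2 q_small.
(* (1 - eps/4) a0 > (1 - eps/2) (1 - eps/4) delta >= (1 - 3 eps/4) delta *)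
nra.
Qed.

Lemma pr_oracle_estimator_gt eps q : delta < 1 -> 0 < eps ->
  4 * q ^+ 2 < eps ^+ 2 * m%:R * delta ->
  1 - 4 / (eps ^+ 2 * (m%:R * delta)) <=
    pr Pr [set w | (1 - eps) * TV P Q <
      lambda_oracle q P Q (rho_star f g) (X^~ w) (Y^~ w) 2^-1]
  <= 1.
Proof.
move=> delta_lt1 eps_gt0 q_small; apply: pr_ge_count_lower_tail => // [|w Yw a0_gt].
  exact: (measurable_sample_event (fun a0 _ e => (1 - eps) * TV P Q <
    a0 - e - q * sigma_or m n P Q (rho_star f g) 2^-1)).
rewrite /= /lambda_oracle TV_mixture emp_cdf_Y_out//.
rewrite (_ : emp_cdf _ _ _ = A0hat (rho_star f g) (X^~ w)) // A0hat_samples.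
rewrite /sigma_or /cdf_of -/(pr P bayes_set) -/(pr Q bayes_set).
rewrite pr_P_bayes_set pr_Q_bayes_set mul0r mul0r addr0 subr0.
set s := Num.sqrt _.
have Ms2 : m%:R * s ^+ 2 <= delta.
  have v_ge0 : 0 <= delta * (1 - delta) by rewrite mulr_ge0 ?subr_ge0 ?ltW.
  by rewrite /s sqr_sqrt_div//; nra.
have := mul_lt_am_gm eps_gt0 m_pos Ms2 q_small.
lra.
Qed.

End mixture_model.

Lemma limn_esup_fin_num_ub {R : realType} (u : nat -> R) :
  limn_esup (fun N => (u N)%:E) \is a fin_num ->
  exists2 M : R, 0 < M & \forall N \near \oo, u N <= M.
Proof.
set L := limn_esup _ => L_fin.
have L_inf : L = ereal_inf (range (esups (fun N => (u N)%:E))).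
  by rewrite /L limn_esup_lim; apply/cvg_lim => //; exact: cvg_esups_inf.
have : (ereal_inf (range (esups (fun N => (u N)%:E))) < (fine L + 1)%:E)%E.
  by rewrite -L_inf -[X in (X < _)%E](fineK L_fin) lte_fin ltrDl.
case/ereal_inf_lt => _ [N0 _ <-] supN0_lt.
exists (Num.max (fine L + 1) 1); first by rewrite lt_max ltr01 orbT.
exists N0 => // N /= N0N; rewrite le_max; apply/orP; left.
by rewrite -lee_fin (le_trans _ (ltW supN0_lt))//; apply: ereal_sup_ubound; exists N.
Qed.

Lemma natr_powR_cvgy {R : realType} [a : R] : 0 < a ->
  (fun N : nat => (N%:R : R) `^ a) @ \oo --> +oo.
Proof.
move=> a_gt0; apply/cvgryPge => B; near=> N.
have B_le : B <= Num.max B 0 by rewrite le_max lexx.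
have max_ge0 : 0 <= Num.max B 0 by rewrite le_max lexx orbT.
have root_le : Num.max B 0 `^ a^-1 <= N%:R by near: N; exact: nbhs_infty_ger.
apply: (le_trans B_le); rewrite -[leLHS](powRr1 max_ge0).
rewrite -[X in _ `^ X](mulVf (lt0r_neq0 a_gt0)) powRrM.
by apply: (ge0_ler_powR (ltW a_gt0)); rewrite ?nnegrE ?powR_ge0.
Unshelve. all: by end_near.
Qed.

Lemma mul_cvgy_of_ratio_bounded {R : realType} (m : nat -> nat) (pi gamma : R)
    (delta : nat -> R) :
  0 < pi -> (fun N => (m N)%:R / (N%:R : R)) @ \oo --> pi -> -1 < gamma ->
  (forall N, 0 < delta N) ->
  limn_esup (fun N => ((N%:R : R) `^ gamma / delta N)%:E) \is a fin_num ->
  (fun N => (m N)%:R * delta N) @ \oo --> +oo.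
Proof.
move=> pi_gt0 m_cvg gamma_gt delta_gt0 /limn_esup_fin_num_ub[M M_gt0 ratio_le].
have c_gt0 : 0 < pi / (2 * M) by rewrite divr_gt0 ?mulr_gt0.
apply: (@ger_cvgy _ _ _ _ (fun N => pi / (2 * M) * N%:R `^ (1 + gamma))); last first.
  have /natr_powR_cvgy/cvgryPge pow_cvgy : 0 < 1 + gamma by lra.
  apply/cvgryPge => B; apply: filterS (pow_cvgy (B / (pi / (2 * M)))) => N.
  by rewrite ler_pdivrMr// mulrC.
near=> N.
have N_gt0 : (0 : R) < N%:R by rewrite ltr0n; near: N; exact: nbhs_infty_gt.
have m_ge : pi / 2 * N%:R <= (m N)%:R.
  have : pi / 2 < (m N)%:R / N%:R.
    by near: N; have := @cvgr_gt R _ _ _ _ _ m_cvg (pi / 2); apply; lra.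
  by rewrite ltr_pdivlMr// => /ltW.
have pow_le : N%:R `^ gamma <= M * delta N.
  have : N%:R `^ gamma / delta N <= M by near: N.
  by rewrite ler_pdivrMr// mulrC.
rewrite powRD ?(gt_eqF N_gt0) ?implybT// powRr1 ?(ltW N_gt0)//.
apply: le_trans (ler_wpM2l (ltW c_gt0) (ler_wpM2l (ltW N_gt0) pow_le)) _.
rewrite (_ : _ * (_ * (M * delta N)) = pi / 2 * N%:R * delta N); last by field; rewrite gt_eqF.
by rewrite ler_wpM2r ?(ltW (delta_gt0 N)).
Unshelve. all: by end_near.
Qed.

Lemma cvg_to1_of_lower_bound {R : realType} [eps : R] [u v : nat -> R] : 0 < eps ->
  v @ \oo --> +oo ->
  (\forall N \near \oo, 1 - 4 / (eps ^+ 2 * v N) <= u N <= 1) -> u @ \oo --> (1 : R).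
Proof.
move=> eps_gt0 v_cvgy u_bounds.
have scaled_cvgy : (fun N => eps ^+ 2 * v N / 4) @ \oo --> +oo.
  apply/cvgryPge => B; move/cvgryPge/(_ (4 * B / eps ^+ 2)): v_cvgy.
  by apply: filterS => N; rewrite ler_pdivrMr ?exprn_gt0// => ?; rewrite ler_pdivlMr//; lra.
have bound_cvg0 : (fun N => 4 / (eps ^+ 2 * v N)) @ \oo --> 0.
  have <- : unstable.inv_fun (fun N => eps ^+ 2 * v N / 4) = (fun N => 4 / (eps ^+ 2 * v N)).
    by apply/funext => N /=; rewrite invf_div.
  by apply/gtr0_cvgV0 => //; move/cvgryPgt: scaled_cvgy; apply.
apply: (squeeze_cvgr (f := fun N => 1 - 4 / (eps ^+ 2 * v N)) (h := fun=> 1) u_bounds).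
  by rewrite -[X in _ --> X]subr0; apply: cvgB bound_cvg0; exact: cvg_cst.
exact: cvg_cst.
Qed.

Lemma model_mean_count_cvgy {R : realType} {d : measure_display} {T : measurableType d}
    {Q C : probability T R} {S : set T} {m : nat -> nat} [pi gamma : R]
    {delta : nat -> R} {P : nat -> probability T R} :
  measurable S -> Q (~` S) = 0%E -> C S = 0%E ->
  0 < pi -> (fun N => (m N)%:R / (N%:R : R)) @ \oo --> pi -> -1 < gamma ->
  in_model Q C delta P -> asymp (fun N => TV (P N) Q) (fun N => (N%:R : R) `^ gamma) ->
  (fun N => (m N)%:R * delta N) @ \oo --> +oo.
Proof.
move=> mS QS CS pi_gt0 m_cvg gamma_gt [delta01 PE] [_ ratio_fin].
have delta_gt0 N : 0 < delta N by case/andP: (delta01 N).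
have TV_eq N : TV (P N) Q = delta N by exact: TV_mixture mS QS CS (delta_gt0 N) (PE N).
apply: mul_cvgy_of_ratio_bounded pi_gt0 m_cvg gamma_gt delta_gt0 _.
by under eq_fun do rewrite -TV_eq.
Qed.

Lemma inf_eq_lbound_mem {R : realType} (E : set R) x : E x -> lbound E x -> inf E = x.
Proof.
move=> Ex x_lb; apply/le_anti/andP; split; first by apply: ge_inf => //; exists x.
by apply: lb_le_inf => //; exists x.
Qed.

Section gamma_minus_one.
Context {R : realType} {d : measure_display} {T : measurableType d}
  {Q C : probability T R} {S : set T} {m n : nat -> nat} [pi : R] {q eps : R}.
Hypotheses (mS : measurable S) (QS : Q (~` S) = 0%E) (CS : C S = 0%E).
Hypotheses (sizes_pos : \forall N \near \oo, (0 < m N)%N /\ (0 < n N)%N)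
  (pi_gt0 : 0 < pi) (m_cvg : (fun N => (m N)%:R / (N%:R : R)) @ \oo --> pi)
  (eps01 : 0 < eps <= 1).

Let eps_gt0 : 0 < eps. Proof. by case/andP: eps01. Qed.

Lemma eventually_large_samples [gamma : R] [delta : nat -> R] [P : nat -> probability T R] :
  -1 < gamma -> in_model Q C delta P ->
  asymp (fun N => TV (P N) Q) (fun N => (N%:R : R) `^ gamma) ->
  \forall N \near \oo,
    [/\ (0 < m N)%N, (0 < n N)%N & 4 * q ^+ 2 < eps ^+ 2 * (m N)%:R * delta N].
Proof.
move=> gamma_gt model ratio; near=> N.
have [m_gt0 n_gt0] : (0 < m N)%N /\ (0 < n N)%N by near: N.
split => //; rewrite -mulrA -ltr_pdivrMl ?exprn_gt0// mulrC; near: N.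
by move: (model_mean_count_cvgy mS QS CS pi_gt0 m_cvg gamma_gt model ratio) => /cvgryPgt; apply.
Unshelve. all: by end_near.
Qed.

Lemma bayes_ok_N1 : bayes_ok Q C m n q eps (-1).
Proof.
move=> gamma /andP[gamma_gt _] delta P model ratio mu f g dens dO Omega Pr X Y samples.
have [delta01 PE] := model.
apply: (cvg_to1_of_lower_bound eps_gt0
  (model_mean_count_cvgy mS QS CS pi_gt0 m_cvg gamma_gt model ratio)).
apply: filterS (eventually_large_samples gamma_gt model ratio) => N [m_gt0 n_gt0 q_small].
have /andP[delta_gt0 _] := delta01 N.
exact (pr_bayes_estimator_gt mS QS CS delta_gt0 (PE N) (dens N).1 (dens N).2 (samples N)
  m_gt0 n_gt0 _ _ eps01 q_small).
Qed.

Lemma oracle_ok_N1 : oracle_ok Q C m n q eps (-1).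
Proof.
move=> gamma /andP[gamma_gt _] delta P model ratio mu f g dens.
exists (fun=> 2^-1); split => [N|dO Omega Pr X Y samples].
  by rewrite invr_ge0 ler0n invf_le1 ?ler1n.
have [delta01 PE] := model.
apply: (cvg_to1_of_lower_bound eps_gt0
  (model_mean_count_cvgy mS QS CS pi_gt0 m_cvg gamma_gt model ratio)).
apply: filterS (eventually_large_samples gamma_gt model ratio) => N [m_gt0 _ q_small].
have /andP[delta_gt0 delta_lt1] := delta01 N.
exact (pr_oracle_estimator_gt mS QS CS delta_gt0 (PE N) (dens N).1 (dens N).2 (samples N)
  m_gt0 _ _ delta_lt1 eps_gt0 q_small).
Qed.

End gamma_minus_one.

Theorem proposition4 (R : realType) (d : measure_display) (T : measurableType d)
  (Q C : probability T R)
  (Hdisj : exists S : set T, measurable S /\ Q (~` S) = 0%E /\ C S = 0%E)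
  (m n : nat -> nat)
  (Hmn : forall N, (2 <= N)%N -> (0 < m N)%N /\ (m N <= n N)%N /\ (m N + n N)%N = N)
  (pi : R) (Hpi : 0 < pi < 1)
  (Hlim : (fun N => (m N)%:R / (N%:R : R)) @ \oo --> pi)
  (alpha : R) (Halpha : 0 < alpha < 1)
  (q : R) (Hq : fine (normal_prob 0 1 [set x : R | x <= q]) = 1 - alpha)
  (eps : R) (Heps : 0 < eps <= 1) :
  gamma_bayes Q C m n q eps = -1 /\ gamma_oracle Q C m n q eps = -1.
Proof.
case: Hdisj => S [mS [QS CS]]; have [pi_gt0 _] := andP Hpi.
have sizes_pos : \forall N \near \oo, (0 < m N)%N /\ (0 < n N)%N.
  near=> N; have N_ge2 : (2 <= N)%N by near: N; exact: nbhs_infty_ge.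
  by have [m_gt0 [mn _]] := Hmn N N_ge2; split; last exact: leq_trans mn.
split; apply: inf_eq_lbound_mem => [|x [/andP[]]//].
- by split; [rewrite lexx ltrN10 | exact: bayes_ok_N1 mS QS CS sizes_pos pi_gt0 Hlim Heps].
- by split; [rewrite lexx ltrN10 | exact: oracle_ok_N1 mS QS CS sizes_pos pi_gt0 Hlim Heps].
Unshelve. all: by end_near.
Qed.
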